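(* Let $X$ be a completely regular I-favorable space and let $\mathcal T$ be the family of all cozero subsets of $X$. Let $\mathcal C$ be a $\mathcal T$-club (defined in the context). For $\mathcal P\subseteq\mathcal R$ in $\mathcal C$ define $q^{\mathcal R}_{\mathcal P}:X/\mathcal R\to X/\mathcal P$ by $q^{\mathcal R}_{\mathcal P}([x]_{\mathcal R})=[x]_{\mathcal P}$, where each $X/\mathcal P$ carries the $\mathcal Q_{\mathcal P}$-topology. Then the limit $Y=\varprojlim\{X/\mathcal R,q^{\mathcal R}_{\mathcal P},\mathcal C\}$ (with $\mathcal C$ directed by inclusion) contains a dense subspace homeomorphic to $X$.
   Context: For a family $\mathcal P$ of subsets of a set $X$ and $x\in X$, $[x]_{\mathcal P}=\{y\in X: \text{for every }V\in\mathcal P,\ x\in V\iff y\in V\}$; $X/\mathcal P$ is the set of all classes $[x]_{\mathcal P}$, and $q_{\mathcal P}:X\to X/\mathcal P$, $q_{\mathcal P}(x)=[x]_{\mathcal P}$, is the $\mathcal Q_{\mathcal P}$-map. The $\mathcal Q_{\mathcal P}$-topology on $X/\mathcal P$ is the coarsest topology containing all sets $q_{\mathcal P}[V]$, $V\in\mathcal P$. For a family $\mathcal R$ of subsets of $X$, $\mathcal R_{seq}$ is the family of all sets $W$ for which there are $\{U_n\}_{n\in\omega}\subseteq\mathcal R$ and $\{V_n\}_{n\in\omega}\subseteq\mathcal R$ with $U_k\subseteq X\setminus V_k\subseteq U_{k+1}$ for all $k$ and $\bigcup_n U_n=W$. Open-open game: at inning $n$ Player I chooses a non-empty open $A_n$,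 Player II a non-empty open $B_n\subseteq A_n$; Player I wins if $\bigcup_n B_n$ is dense; $X$ is I-favorable if Player I has a winning strategy. A strategy is a function $\sigma$ on finite sequences (including the empty one) of members of a family of sets with values in that family; a family $\mathcal P$ is closed under $\sigma$ if $\sigma(\emptyset)\in\mathcal P$ and $\sigma(B_0,\dots,B_n)\in\mathcal P$ whenever $B_0,\dots,B_n\in\mathcal P$. $\mathcal T$-club: for each $W\in\mathcal T$ fix sequences $\{U^W_n\},\{V^W_n\}\subseteq\mathcal T$ witnessing $W\in\mathcal T_{seq}$ (possible since $W=f^{-1}((0,1])$ for a continuous $f:X\to[0,1]$). Choose $\sigma^*_k(\emptyset)\in\mathcal T$ for each $k$, put $\sigma^*_{2n}(W)=U^W_n$, $\sigma^*_{2n+1}(W)=V^W_n$ and $\sigma^*_k(S)=\sigma^*_k(\emptyset)$ for all other finite sequences $S$. Let also $\sigma_\cup(A_0,\dots,A_n)=A_0\cup\dots\cup A_n$ and $\sigma_\cap(A_0,\dots,A_n)=A_0\cap\dots\cap A_n$, and fix a winning strategy for Player I with values in $\mathcal T$. For a countable $\mathcal Q\subseteq\mathcal T$ let $\mathcal P(\mathcal Q)$ be the smallest family with $\mathcal Q\subseteq\mathcal P(\mathcal Q)\subseteq\mathcal T$ closed under this winning strategy, all $\sigma^*_k$, $\sigma_\cup$ and $\sigma_\cap$. A $\mathcal T$-club is the collection $\mathcal C=\{\mathcal P(\mathcal Q):\mathcal Q\subseteq\mathcal T\text{ countable}\}$; each member is countable, a ring of sets (closed under finite unions and intersections), contained in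 its own $seq$-family and closed under a winning strategy for Player I. *)

From HB Require Import structures.
From mathcomp Require Import all_boot all_order all_algebra.
From mathcomp Require Import all_classical all_reals all_analysis.
From mathcomp Require Import Rstruct Rstruct_topology.
Set Implicit Arguments. Unset Strict Implicit. Unset Printing Implicit Defensive.
Import Order.TTheory GRing.Theory Num.Theory.
Local Open Scope classical_set_scope.
Local Open Scope ring_scope.

Notation RR := Rdefinitions.R.

Definition cozero (X : topologicalType) (W : set X) : Prop :=
  exists f : X -> RR, continuous f /\ (forall x, 0 <= f x <= 1) /\
    W = [set x | 0 < f x].

Definition completely_regular (X : topologicalType) : Prop :=
  (forall x : X, closed [set x]) /\
  forall (A : set X) (x : X), closed A -> ~ A x ->
    exists f : X -> RR, continuous f /\ (forall z, 0 <= f z <= 1) /\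
      f x = 0 /\ (forall z, A z -> f z = 1).

(* Open-open game. A position is the sequence (B_0,...,B_{n-1}) of
   Player II's moves; Player I answers sigma (B_0,...,B_{n-1}) = A_n. *)
Definition legal_position (X : topologicalType)
    (sigma : seq (set X) -> set X) (s : seq (set X)) : Prop :=
  forall i, (i < size s)%N ->
    open (nth set0 s i) /\ nth set0 s i !=set0 /\
    nth set0 s i `<=` sigma (take i s).

Definition I_winning_strategy (X : topologicalType)
    (sigma : seq (set X) -> set X) : Prop :=
  (forall s, legal_position sigma s -> open (sigma s) /\ sigma s !=set0) /\
  (forall B : nat -> set X,
     (forall n, open (B n) /\ B n !=set0 /\ B n `<=` sigma (mkseq B n)) ->
     dense (\bigcup_n B n)).

Definition I_favorable (X : topologicalType) : Prop :=
  exists sigma : seq (set X) -> set X, I_winning_strategy sigma.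

Fixpoint all_in (X : Type) (F : set (set X)) (s : seq (set X)) : Prop :=
  match s with [::] => True | A :: s' => F A /\ all_in F s' end.

Definition closed_under (X : Type) (F : set (set X))
    (st : seq (set X) -> set X) : Prop :=
  forall s, all_in F s -> F (st s).

(* sigma*_k : sigma*_{2n}(W) = U^W_n, sigma*_{2n+1}(W) = V^W_n,
   and sigma*_k(S) = sigma*_k(empty) = e k otherwise. *)
Definition sigma_star (X : Type) (U V : set X -> nat -> set X)
    (e : nat -> set X) (k : nat) (s : seq (set X)) : set X :=
  match s with
  | [:: W] => if odd k then V W k./2 else U W k./2
  | _ => e k
  end.

(* U, V witness W \in T_seq for every W \in T. *)
Definition seq_witnesses (X : Type) (T : set (set X))
    (U V : set X -> nat -> set X) : Prop :=
  forall W, T W ->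
    (forall n, T (U W n) /\ T (V W n)) /\
    (forall k, U W k `<=` ~` V W k /\ ~` V W k `<=` U W k.+1) /\
    \bigcup_n U W n = W.

(* P(Q): the smallest family F with Q <= F <= T, closed under sigma,
   every sigma*_k, sigma_cup and sigma_cap (finite non-empty unions and
   intersections). *)
Definition Pgen (X : Type) (T : set (set X)) (U V : set X -> nat -> set X)
    (e : nat -> set X) (sigma : seq (set X) -> set X) (Q : set (set X))
    : set (set X) :=
  [set W | forall F : set (set X),
     Q `<=` F -> F `<=` T -> closed_under F sigma ->
     (forall k, closed_under F (sigma_star U V e k)) ->
     (forall A B, F A -> F B -> F (A `|` B)) ->
     (forall A B, F A -> F B -> F (A `&` B)) -> F W].

Definition is_T_club (X : topologicalType) (C : set (set (set X))) : Prop :=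
  exists (U V : set X -> nat -> set X) (e : nat -> set X)
         (sigma : seq (set X) -> set X),
    seq_witnesses (@cozero X) U V /\
    (forall k, cozero (e k)) /\
    I_winning_strategy sigma /\ (forall s, cozero (sigma s)) /\
    C = [set P | exists Q : set (set X),
                  Q `<=` @cozero X /\ countable Q /\
                  P = Pgen (@cozero X) U V e sigma Q].

Definition cls (X : Type) (P : set (set X)) (x : X) : set X :=
  [set y | forall V, P V -> (V x <-> V y)].

Definition quot (X : Type) (P : set (set X)) : set (set X) :=
  [set c | exists x, c = cls P x].

Definition is_topology_on (T : Type) (A : set T) (tau : set (set T)) : Prop :=
  (forall O, tau O -> O `<=` A) /\ tau A /\
  (forall O1 O2, tau O1 -> tau O2 -> tau (O1 `&` O2)) /\
  (forall F : set (set T), F `<=` tau -> tau (\bigcup_(O in F) O)).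

Definition gen_top_on (T : Type) (A : set T) (S : set (set T)) : set (set T) :=
  [set O | forall tau, is_topology_on A tau -> S `<=` tau -> tau O].

Definition Qtop (X : Type) (P : set (set X)) : set (set (set X)) :=
  gen_top_on (quot P) [set cls P @` V | V in P].

(* The product  prod_{R in C} X/R  (functions indexed by families,
   trivial (= set0) outside C), with the product (Tychonoff) topology. *)
Definition prod_space (X : Type) (C : set (set (set X)))
    : set (set (set X) -> set X) :=
  [set y | forall R, (C R -> quot R (y R)) /\ (~ C R -> y R = set0)].

Definition prod_top (X : Type) (C : set (set (set X)))
    : set (set (set (set X) -> set X)) :=
  gen_top_on (prod_space C)
    [set Z | exists R, C R /\ exists O, Qtop R O /\
             Z = [set y | prod_space C y /\ O (y R)]].

(* Inverse limit: threads compatible with q^R_P([x]_R) = [x]_P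
   for P <= R in C; topology = subspace topology of the product. *)
Definition inv_limit (X : Type) (C : set (set (set X)))
    : set (set (set X) -> set X) :=
  [set y | prod_space C y /\
     forall P R x, C P -> C R -> P `<=` R -> y R = cls R x -> y P = cls P x].

Definition inv_limit_top (X : Type) (C : set (set (set X)))
    : set (set (set (set X) -> set X)) :=
  [set Z | exists O, prod_top C O /\ Z = O `&` inv_limit C].

Definition has_dense_copy_of (X : topologicalType) (C : set (set (set X)))
    : Prop :=
  exists h : X -> (set (set X) -> set X),
    (forall x, inv_limit C (h x)) /\
    injective h /\
    (forall Z, inv_limit_top C Z -> Z !=set0 -> (Z `&` range h) !=set0) /\
    (forall Z, inv_limit_top C Z -> open (h @^-1` Z)) /\
    (forall U : set X, open U ->
       exists Z, inv_limit_top C Z /\ h @` U = Z `&` range h).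

From mathcomp Require Import all_boot all_classical all_analysis.
From mathcomp Require Import all_order all_algebra Rstruct Rstruct_topology lra.
Set Implicit Arguments. Unset Strict Implicit. Unset Printing Implicit Defensive.
Import Order.TTheory GRing.Theory Num.Theory.
Local Open Scope classical_set_scope.
Local Open Scope ring_scope.

(* Send x to its thread R |-> [x]_R.  For a cozero set W lying in a member R
   of the club (the generated family P({W}) is one), the set of classes of
   points of W is open in X/R and its preimage under x |-> [x]_R is W; since
   cozero sets form a base of a completely regular space, this makes the map
   injective, continuous and open onto its image.  For density, an open set of
   the limit constrains only finitely many coordinates; a member R above them
   all (the club is directed) and a point x with [x]_R = y_R give a thread
   agreeing with y on each of them. *)

Lemma countable_setU (T : Type) (A B : set T) :
  countable A -> countable B -> countable (A `|` B).
Proof.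
move=> cA cB.
have -> : A `|` B = \bigcup_(b in [set: bool]) (if b then A else B).
  apply/seteqP; split=> [x [Ax|Bx]|x [[] _ hx]];
    [by exists true | by exists false | by left | by right].
by apply: bigcup_countable; [exact: countableP | case].
Qed.

Lemma cozero_open (X : topologicalType) (W : set X) : cozero W -> open W.
Proof.
move=> [f [cf [_ ->]]].
have -> : [set x | 0 < f x] = f @^-1` [set r | 0 < r] by [].
by apply: open_comp; [move=> x _; exact: cf | exact: open_gt].
Qed.

Lemma cozeroU (X : topologicalType) (A B : set X) :
  cozero A -> cozero B -> cozero (A `|` B).
Proof.
move=> [f [cf [bf ->]]] [g [cg [bg ->]]].
exists (f \max g); split; first by move=> x; apply: continuous_max; [exact: cf|exact: cg].
split.
  move=> x /=; have /andP[f0 f1] := bf x; have /andP[g0 g1] := bg x.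
  by rewrite le_max f0 /= ge_max f1 g1.
by apply/seteqP; split => x /=; rewrite lt_max => /orP.
Qed.

Lemma cozeroI (X : topologicalType) (A B : set X) :
  cozero A -> cozero B -> cozero (A `&` B).
Proof.
move=> [f [cf [bf ->]]] [g [cg [bg ->]]].
exists (f \min g); split; first by move=> x; apply: continuous_min; [exact: cf|exact: cg].
split.
  move=> x /=; have /andP[f0 f1] := bf x; have /andP[g0 g1] := bg x.
  by rewrite le_min f0 g0 /= ge_min f1.
by apply/seteqP; split => x /=; rewrite lt_min => /andP.
Qed.

Lemma cozero_nbhs_subset (X : topologicalType) (U : set X) (x : X) :
  completely_regular X -> open U -> U x ->
  exists W, [/\ cozero W, W x & W `<=` U].
Proof.
move=> [_ hcr] oU Ux.
have [f [cf [bf [fx0 f1]]]] := hcr (~` U) x (open_closedC oU) (fun H => H Ux).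
exists [set z | 0 < 1 - f z]; split.
- exists (fun z => 1 - f z); split; last by split => // z; have := bf z; lra.
  by move=> z; exact: (@continuousB RR RR^o X (cst 1) f z (cvg_cst _) (cf z)).
- by rewrite /= fx0 subr0; exact: ltr01.
- by move=> z; apply: contraPP => /f1 /= ->; rewrite subrr ltxx.
Qed.

Lemma cozero_separates (X : topologicalType) (x y : X) :
  completely_regular X -> x <> y -> exists W, [/\ cozero W, W x & ~ W y].
Proof.
move=> hX nxy.
have [W [cW Wx sW]] := cozero_nbhs_subset hX (closed_openC (hX.1 y)) nxy.
by exists W; split=> // /sW; apply.
Qed.

Section GeneratedTopology.
Variables (T : Type) (A : set T) (S : set (set T)).

Lemma gen_top_sub : S `<=` gen_top_on A S.
Proof. by move=> O SO tau _; apply. Qed.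

Lemma gen_top_bigcup (F : set (set T)) :
  F `<=` gen_top_on A S -> gen_top_on A S (\bigcup_(O in F) O).
Proof.
move=> hF tau htau hS; apply: htau.2.2.2 => O /hF; exact.
Qed.

Lemma gen_top_preimage_open (Y : topologicalType) (g : Y -> T) :
  (forall y, A (g y)) -> (forall O, S O -> O `<=` A /\ open (g @^-1` O)) ->
  forall O, gen_top_on A S O -> open (g @^-1` O).
Proof.
move=> gA gS O hO.
suff [] : [set O | O `<=` A /\ open (g @^-1` O)] O by [].
apply: hO => //; split; first by move=> O' [].
split.
  split=> //; suff -> : g @^-1` A = setT by exact: openT.
  by apply/seteqP; split=> y // _; exact: gA.
split.
  move=> O1 O2 [s1 o1] [s2 o2]; split; last exact: openI.
  by move=> z [/s1].
move=> F hF; split=> [z [G FG Gz]|]; first by have [+ _] := hF _ FG; apply.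
by apply: bigcup_open => O' /hF [].
Qed.
End GeneratedTopology.

Section Classes.
Variable X : Type.
Implicit Types (P R : set (set X)) (V : set X) (x y : X).

Lemma cls_refl R x : cls R x x.
Proof. by move=> V _. Qed.

Lemma cls_eq R x y : cls R x y -> cls R x = cls R y.
Proof.
by move=> hy; apply/seteqP; split=> z hz V RV; move: (hy V RV) (hz V RV); tauto.
Qed.

Lemma cls_eq_restrict P R x y :
  P `<=` R -> cls R x = cls R y -> cls P x = cls P y.
Proof.
move=> PR exy; apply: cls_eq => V PV; have := @cls_refl R y; rewrite -exy.
by move=> /(_ V (PR V PV)).
Qed.

Lemma image_cls_mem R V x : R V -> (cls R @` V) (cls R x) <-> V x.
Proof.
move=> RV; split=> [[v Vv evx]|Vx]; last by exists x.
by have := @cls_refl R x; rewrite -evx => /(_ V RV) [/(_ Vv)].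
Qed.

End Classes.

Lemma Qtop_open (X : topologicalType) (R : set (set X)) O :
  R `<=` @cozero X -> Qtop R O -> open [set x | O (cls R x)].
Proof.
move=> Rcoz; apply: (gen_top_preimage_open (g := cls R)) => [x|_ [V RV <-]].
  by exists x.
split; first by move=> _ [v _ <-]; exists v.
have -> : cls R @^-1` (cls R @` V) = V.
  by apply/seteqP; split=> x /(image_cls_mem _ RV).
exact/cozero_open/Rcoz.
Qed.

Section ThreadEmbedding.
Variables (X : topologicalType) (C : set (set (set X))).

Definition thread_of (x : X) (R : set (set X)) : set X :=
  if pselect (C R) then cls R x else set0.

Definition cylinder (R : set (set X)) (O : set (set X)) :
    set (set (set X) -> set X) :=
  [set y | prod_space C y /\ O (y R)].

Lemma thread_ofE x R : C R -> thread_of x R = cls R x.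
Proof. by rewrite /thread_of; case: pselect. Qed.

Lemma prod_space_thread_of x : prod_space C (thread_of x).
Proof.
move=> R; rewrite /thread_of; case: pselect => // CR.
by split=> // _; exists x.
Qed.

Lemma inv_limit_thread_of x : inv_limit C (thread_of x).
Proof.
split; first exact: prod_space_thread_of.
move=> P R x' CP CR PR; rewrite !thread_ofE //.
exact: cls_eq_restrict.
Qed.

Lemma cylinder_open R O : C R -> Qtop R O -> prod_top C (cylinder R O).
Proof. by move=> CR QO; apply: gen_top_sub; exists R; split=> //; exists O. Qed.

Lemma cylinder_thread_of R O x :
  C R -> cylinder R O (thread_of x) <-> O (cls R x).
Proof.
move=> CR; rewrite /cylinder /= thread_ofE //.
by split=> [[]|] //; split=> //; exact: prod_space_thread_of.
Qed.

Lemma prod_top_finite_support O y :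
  prod_top C O -> O y ->
  exists l, List.Forall C l /\
    forall z, prod_space C z -> List.Forall (fun R => z R = y R) l -> O z.
Proof.
move=> hO; move: y.
pose finitely_supported O := O `<=` prod_space C /\ forall y, O y ->
  exists l, List.Forall C l /\
    forall z, prod_space C z -> List.Forall (fun R => z R = y R) l -> O z.
suff [] : finitely_supported O by [].
apply: hO => [|_ [R [CR [Q [_ ->]]]]]; last first.
  split=> [y [] //|y [_ Qy]]; exists [:: R]; split; first by constructor.
  by move=> z pz /List.Forall_cons_iff [zy _]; split=> //; rewrite zy.
split; first by move=> ? [].
split.
  by split=> // y _; exists [::]; split=> // z.
split.
  move=> O1 O2 [s1 t1] [s2 t2]; split; first by move=> y [/s1].
  move=> y [/t1 [l1 [C1 g1]] /t2 [l2 [C2 g2]]].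
  exists (l1 ++ l2); split; first exact/List.Forall_app.
  by move=> z pz /List.Forall_app [z1 z2]; split; [exact: g1 | exact: g2].
move=> F hF; split; first by move=> y [G FG Gy]; have [+ _] := hF _ FG; apply.
move=> y [G FG Gy]; have [_ /(_ y Gy) [l [Cl gl]]] := hF _ FG.
by exists l; split=> // z pz zl; exists G => //; exact: gl.
Qed.

Hypothesis C_cozero : forall R, C R -> R `<=` @cozero X.
Hypothesis C_directed : forall R1 R2, C R1 -> C R2 ->
  exists R, [/\ C R, R1 `<=` R & R2 `<=` R].
Hypothesis C_neq0 : C !=set0.
Hypothesis C_cover : forall W, cozero W -> exists2 R, C R & R W.

Lemma upper_bound l : List.Forall C l ->
  exists R, C R /\ List.Forall (fun P => P `<=` R) l.
Proof.
elim: l => [_|P l IH /List.Forall_cons_iff [CP /IH [R [CR lR]]]].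
  by have [R CR] := C_neq0; exists R.
have [R' [CR' PR' RR']] := C_directed CP CR.
exists R'; split=> //; constructor=> //.
by apply: List.Forall_impl lR => Q QR; exact: subset_trans RR'.
Qed.

Lemma thread_of_dense Z :
  inv_limit_top C Z -> Z !=set0 -> (Z `&` range thread_of) !=set0.
Proof.
move=> [G [hG ->]] [y [Gy iy]].
have [l [Cl lG]] := prod_top_finite_support hG Gy.
have [R [CR lR]] := upper_bound Cl.
have [x yR] := (iy.1 R).1 CR.
exists (thread_of x); split; last by exists x.
split; last exact: inv_limit_thread_of.
apply: lG; first exact: prod_space_thread_of.
apply/List.Forall_forall => P inP.
have CP := (List.Forall_forall _ _).1 Cl P inP.
rewrite thread_ofE //; apply/esym/(iy.2 P R x) => //.
exact: (List.Forall_forall _ _).1 lR P inP.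
Qed.

Lemma thread_of_continuous Z : inv_limit_top C Z -> open (thread_of @^-1` Z).
Proof.
move=> [G [hG ->]].
have -> : thread_of @^-1` (G `&` inv_limit C) = thread_of @^-1` G.
  apply/seteqP; split=> x /=; first by case.
  by split=> //; exact: inv_limit_thread_of.
apply: gen_top_preimage_open hG => [x|_ [R [CR [Q [QO ->]]]]].
  exact: prod_space_thread_of.
split; first by move=> ? [].
have -> : thread_of @^-1` cylinder R Q = [set x | Q (cls R x)].
  by apply/seteqP; split=> x /(cylinder_thread_of _ _ CR).
exact: Qtop_open (C_cozero CR) QO.
Qed.

Lemma thread_of_inj : completely_regular X -> injective thread_of.
Proof.
move=> hX x y exy; apply: contrapT => nxy.
have [W [cW Wx nWy]] := cozero_separates hX nxy.
have [R CR RW] := C_cover cW.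
apply: nWy; apply/(image_cls_mem _ RW).
by rewrite -(thread_ofE y CR) -exy thread_ofE //; exact/(image_cls_mem _ RW).
Qed.

Lemma thread_of_open_image U : completely_regular X -> open U ->
  exists Z, inv_limit_top C Z /\ thread_of @` U = Z `&` range thread_of.
Proof.
move=> hX oU.
pose F := [set S | exists R W,
  [/\ C R, R W, W `<=` U & S = cylinder R (cls R @` W)]].
exists ((\bigcup_(S in F) S) `&` inv_limit C); split.
  exists (\bigcup_(S in F) S); split=> //; apply: gen_top_bigcup.
  move=> _ [R [W [CR RW _ ->]]]; apply: cylinder_open => //.
  by apply: gen_top_sub; exists W.
apply/seteqP; split=> [_ [x Ux <-]|y [[[S [R [W [CR RW WU ->]]] Sy] _] [x _ xy]]].
  split; last by exists x.
  split; last exact: inv_limit_thread_of.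
  have [W [cW Wx WU]] := cozero_nbhs_subset hX oU Ux.
  have [R CR RW] := C_cover cW.
  exists (cylinder R (cls R @` W)); first by exists R, W.
  exact/(cylinder_thread_of _ _ CR)/(image_cls_mem _ RW).
move: Sy; rewrite -xy => /(cylinder_thread_of _ _ CR) /(image_cls_mem _ RW) /WU.
by exists x.
Qed.

End ThreadEmbedding.

Definition Pgen_family (X : Type) (T : set (set X)) (U V : set X -> nat -> set X)
    (e : nat -> set X) (sigma : seq (set X) -> set X) : set (set (set X)) :=
  [set P | exists Q, Q `<=` T /\ countable Q /\ P = Pgen T U V e sigma Q].

Section PgenFamily.
Variables (X : Type) (T : set (set X)) (U V : set X -> nat -> set X)
  (e : nat -> set X) (sigma : seq (set X) -> set X).
Local Notation PG := (Pgen T U V e sigma).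
Local Notation family := (Pgen_family T U V e sigma).

Lemma Pgen_base Q : Q `<=` PG Q.
Proof. by move=> W QW F QF *; exact: QF. Qed.

Lemma Pgen_mono Q1 Q2 : Q1 `<=` Q2 -> PG Q1 `<=` PG Q2.
Proof. by move=> Q12 W hW F Q2F; apply: hW; exact: subset_trans Q2F. Qed.

Lemma Pgen_sub Q :
  (forall W, T W -> forall n, T (U W n) /\ T (V W n)) ->
  (forall k, T (e k)) -> (forall s, T (sigma s)) ->
  (forall A B, T A -> T B -> T (A `|` B)) ->
  (forall A B, T A -> T B -> T (A `&` B)) ->
  Q `<=` T -> PG Q `<=` T.
Proof.
move=> TUV Te Ts TU TI QT W; apply=> //.
move=> k [|W1 [|W2 s]] /=; try by move=> _; exact: Te.
move=> [TW1 _]; case: (odd k); [exact: (TUV _ TW1 _).2 | exact: (TUV _ TW1 _).1].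
Qed.

Lemma Pgen_family_neq0 : family !=set0.
Proof. by exists (PG set0), set0; do !split=> //; exact: countable0. Qed.

Lemma Pgen_family_directed R1 R2 : family R1 -> family R2 ->
  exists R, [/\ family R, R1 `<=` R & R2 `<=` R].
Proof.
move=> [Q1 [Q1T [cQ1 ->]]] [Q2 [Q2T [cQ2 ->]]].
exists (PG (Q1 `|` Q2)); split.
- exists (Q1 `|` Q2); do !split; last exact: countable_setU.
  by move=> W [/Q1T|/Q2T].
- by apply: Pgen_mono => W; left.
- by apply: Pgen_mono => W; right.
Qed.

Lemma Pgen_family_cover W : T W -> exists2 R, family R & R W.
Proof.
move=> TW; exists (PG [set W]); last exact: Pgen_base.
by exists [set W]; do !split=> // _ ->.
Qed.

End PgenFamily.

Lemma Pgen_family_cozero (X : topologicalType) U V e sigma R :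
  seq_witnesses (@cozero X) U V -> (forall k, cozero (e k)) ->
  (forall s, cozero (sigma s)) ->
  Pgen_family (@cozero X) U V e sigma R -> R `<=` @cozero X.
Proof.
move=> hw he hs [Q [Qcoz [_ ->]]]; apply: Pgen_sub => //.
- by move=> W /hw [].
- exact: cozeroU.
- exact: cozeroI.
Qed.

Theorem theorem8 (X : topologicalType) (C : set (set (set X))) :
  completely_regular X -> I_favorable X -> is_T_club C ->
  has_dense_copy_of C.
Proof.
move=> hX _ [U [V [e [sigma [hw [he [_ [hs ->]]]]]]]].
change (has_dense_copy_of (Pgen_family (@cozero X) U V e sigma)).
clear C; set C := Pgen_family _ _ _ _ _.
have C_cozero := Pgen_family_cozero hw he hs.
have C_directed := @Pgen_family_directed _ (@cozero X) U V e sigma.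
have C_neq0 := Pgen_family_neq0 (@cozero X) U V e sigma.
have C_cover := @Pgen_family_cover _ (@cozero X) U V e sigma.
exists (thread_of C).
split; first exact: inv_limit_thread_of.
split; first exact: thread_of_inj.
split; first exact: thread_of_dense.
split; first exact: thread_of_continuous.
by move=> W oW; exact: thread_of_open_image.
Qed.
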